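(* Assume Non-Degeneracy Assumption I, and let $U,P$ be the optimal solutions constructed from a base sequence and a nonnegative solution of the base-sequence system as in the Structure Theorem part (i). Let $\check U=\sum_n\tau_nu^n$, $\check P=\sum_n\tau_np^n$, and define $\underline{x}\in\mathbb{R}^K$, $\underline{q}\in\mathbb{R}^J$ by $$\underline{x}_k=-\min\Big\{0,\ \min_{1\le n\le N}\sum_{m=1}^n\dot x^m_k\tau_m\Big\},\qquad \underline{q}_j=-\min\Big\{0,\ \min_{1\le n\le N}\sum_{m=n}^N\dot q^m_j\tau_m\Big\}.$$ Then $(\mathbf{u}^0,\mathbf{u}^N)$ is an optimal solution of $$\max\ (\gamma+cT)^\top\mathbf{u}^0+\gamma^\top\mathbf{u}^N\ \text{ s.t. } A\mathbf{u}^0\le\beta-\underline{x},\ A\mathbf{u}^0+A\mathbf{u}^N\le\beta+bT-A\check U,\ \mathbf{u}^0,\mathbf{u}^N\ge0,$$ and $(\mathbf{p}^N,\mathbf{p}^0)$ is an optimal solution of $$\min\ (\beta+bT)^\top\mathbf{p}^N+\beta^\top\mathbf{p}^0\ \text{ s.t. } A^\top\mathbf{p}^N\ge\gamma+\underline{q},\ A^\top\mathbf{p}^N+A^\top\mathbf{p}^0\ge\gamma+cT-A^\top\check P,\ \mathbf{p}^N,\mathbf{p}^0\ge0.$$ (These two LPs are not dual to each other.)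
   Context: Let $A$ be a real $K\times J$ matrix, $\beta,b\in\mathbb{R}^K$, $\gamma,c\in\mathbb{R}^J$, $T>0$. M-CLP: maximize $\int_{0-}^T(\gamma+(T-t)c)^\top dU(t)$ over nonnegative, non-decreasing, right-continuous $U:[0,T]\to\mathbb{R}^J$ with $U(0-)=0$, subject to $AU(t)\le\beta+bt$, $0\le t\le T$. M-CLP$^*$: minimize $\int_{0-}^T(\beta+(T-t)b)^\top dP(t)$ over nonnegative, non-decreasing, right-continuous $P:[0,T]\to\mathbb{R}^K$ with $P(0-)=0$, subject to $A^\top P(t)\ge\gamma+ct$. Non-Degeneracy Assumption I: $b$ is not a linear combination of fewer than $K$ columns of $[A\ I]$ and $c$ is not a linear combination of fewer than $J$ columns of $[A^\top\ I]$. Bases: index sets $\mathcal{K}\subseteq\{1..K\},\mathcal{J}\subseteq\{1..J\}$ such that $\dot x_k$ ($k\in\mathcal{K}$), $u_j$ ($j\notin\mathcal{J}$) are $K$ variables with independent columns in $[A\ I]$; primal basic solution solves $Au+\dot x=b$ with $u_j=0$ ($j\in\mathcal{J}$), $\dot x_k=0$ ($k\notin\mathcal{K}$); dual basic solution solves $A^\top p-\dot q=c$ with $p_k=0$ ($k\in\mathcal{K}$), $\dot q_j=0$ ($j\notin\mathcal{J}$). Admissible: $u,p\ge0$. Adjacent: one pivot apart, primal variable $v_n$ leaving from $B_n$ to $B_{n+1}$. A base sequence consists of admissible, consecutively adjacent bases $B_1..B_N$ (index sets $\mathcal{K}_n,\mathcal{J}_n$, rates $u^n,\dot x^n,p^n,\dot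 q^n$) plus index sets $\mathcal{K}_0,\mathcal{J}_0,\mathcal{K}_{N+1},\mathcal{J}_{N+1}$ with $\mathcal{K}_0\subseteq\mathcal{K}_1$, $\mathcal{J}_{N+1}\subseteq\mathcal{J}_N$. The base-sequence system in unknowns $\mathbf{u}^0,\mathbf{u}^N,q^N,\mathbf{q}^0\in\mathbb{R}^J$, $x^0,\mathbf{x}^N,\mathbf{p}^0,\mathbf{p}^N\in\mathbb{R}^K$, $\tau_1..\tau_N$, with $x^n=x^0+\sum_{m\le n}\dot x^m\tau_m$, $q^n=q^N+\sum_{m>n}\dot q^m\tau_m$, is: (a) $x^n_k=0$ if $v_n=\dot x_k$, $q^n_j=0$ if $v_n=u_j$ ($n=1..N-1$); (b) $\sum\tau_n=T$; (c) $\mathbf{u}^0_j=0$ ($j\in\mathcal{J}_0$), $x^0_k=0$ ($k\notin\mathcal{K}_0$), $\mathbf{p}^0_k=0$ ($k\in\mathcal{K}_0$), $\mathbf{q}^0_j=0$ ($j\notin\mathcal{J}_0$), $\mathbf{p}^N_k=0$ ($k\in\mathcal{K}_{N+1}$), $q^N_j=0$ ($j\notin\mathcal{J}_{N+1}$), $\mathbf{u}^N_j=0$ ($j\in\mathcal{J}_{N+1}$), $\mathbf{x}^N_k=0$ ($k\notin\mathcal{K}_{N+1}$); (d) $A\mathbf{u}^0+x^0=\beta$, $A^\top\mathbf{p}^N-q^N=\gamma$; (e) $A\mathbf{u}^N+\mathbf{x}^N-x^N=0$, $A^\top\mathbf{p}^0-\mathbf{q}^0+q^0=0$. Constructed functions: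 $t_n=\sum_{m\le n}\tau_m$, $u(t)=u^n$ on $(t_{n-1},t_n)$, $U(t)=\mathbf{u}^0+\int_0^tu$ ($t<T$), $U(T)=U(T-)+\mathbf{u}^N$; $p(s)=p^n$ on $(T-t_n,T-t_{n-1})$, $P(s)=\mathbf{p}^N+\int_0^sp$ ($s<T$), $P(T)=P(T-)+\mathbf{p}^0$. *)

From HB Require Import structures.
From mathcomp Require Import all_boot all_order all_algebra.
Set Implicit Arguments. Unset Strict Implicit. Unset Printing Implicit Defensive.
Import Order.TTheory GRing.Theory Num.Theory.
Local Open Scope ring_scope.

Section Defs.
Variable R : realFieldType.

Definition vle n (v w : 'cV[R]_n) : Prop := forall i, v i 0 <= w i 0.
Definition vnonneg n (v : 'cV[R]_n) : Prop := forall i, 0 <= v i 0.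

Variables (K J : nat).

(* Non-Degeneracy Assumption I.
   b is not a linear combination of fewer than K columns of [A I]:
   any combination A*lam + mu of columns of [A I] equal to b uses at least K
   columns with nonzero coefficient; similarly for c and [A^T I]. *)
Definition nondegenerate_I (A : 'M[R]_(K, J)) (b : 'cV[R]_K) (c : 'cV[R]_J) : Prop :=
  (forall (lam : 'cV[R]_J) (mu : 'cV[R]_K),
      (#|[set j | lam j ord0 != 0%R]| + #|[set k | mu k ord0 != 0%R]| < K)%N ->
      A *m lam + mu <> b) /\
  (forall (lam : 'cV[R]_K) (mu : 'cV[R]_J),
      (#|[set k | lam k ord0 != 0%R]| + #|[set j | mu j ord0 != 0%R]| < J)%N ->
      A^T *m lam + mu <> c).

(* Primal variables of a base: inl j = u_j, inr k = xdot_k.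
   Basic variables of base (Ks, Js): xdot_k (k in Ks), u_j (j notin Js). *)
Definition basic_set (Ks : {set 'I_K}) (Js : {set 'I_J}) : {set 'I_J + 'I_K} :=
  [set v | match v with inl j => j \notin Js | inr k => k \in Ks end].

(* (Ks, Js) is a base: the K basic variables have linearly independent
   columns in [A I]. *)
Definition is_base (A : 'M[R]_(K, J)) (Ks : {set 'I_K}) (Js : {set 'I_J}) : Prop :=
  #|basic_set Ks Js| = K /\
  forall (u : 'cV[R]_J) (xd : 'cV[R]_K),
    (forall j, j \in Js -> u j 0 = 0) ->
    (forall k, k \notin Ks -> xd k 0 = 0) ->
    A *m u + xd = 0 -> u = 0 /\ xd = 0.

Definition primal_basic_sol (A : 'M[R]_(K, J)) (b : 'cV[R]_K)
    (Ks : {set 'I_K}) (Js : {set 'I_J}) (u : 'cV[R]_J) (xd : 'cV[R]_K) : Prop :=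
  A *m u + xd = b /\ (forall j, j \in Js -> u j 0 = 0) /\
  (forall k, k \notin Ks -> xd k 0 = 0).

Definition dual_basic_sol (A : 'M[R]_(K, J)) (c : 'cV[R]_J)
    (Ks : {set 'I_K}) (Js : {set 'I_J}) (p : 'cV[R]_K) (qd : 'cV[R]_J) : Prop :=
  A^T *m p - qd = c /\ (forall k, k \in Ks -> p k 0 = 0) /\
  (forall j, j \notin Js -> qd j 0 = 0).

(* Base sequence B_1..B_N (indices 1..N of Ks, Js with rates u, xd, p, qd),
   together with index sets Ks 0, Js 0, Ks (N+1), Js (N+1). *)
Definition base_sequence (A : 'M[R]_(K, J)) (b : 'cV[R]_K) (c : 'cV[R]_J) (N : nat)
    (Ks : nat -> {set 'I_K}) (Js : nat -> {set 'I_J})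
    (u : nat -> 'cV[R]_J) (xd : nat -> 'cV[R]_K)
    (p : nat -> 'cV[R]_K) (qd : nat -> 'cV[R]_J) : Prop :=
  (0 < N)%N /\
  (forall n, (1 <= n <= N)%N ->
     [/\ is_base A (Ks n) (Js n),
         primal_basic_sol A b (Ks n) (Js n) (u n) (xd n),
         dual_basic_sol A c (Ks n) (Js n) (p n) (qd n),
         vnonneg (u n) & vnonneg (p n)]) /\
  (* adjacency: one pivot between consecutive bases *)
  (forall n, (1 <= n < N)%N ->
     #|basic_set (Ks n) (Js n) :\: basic_set (Ks n.+1) (Js n.+1)| = 1%N /\
     #|basic_set (Ks n.+1) (Js n.+1) :\: basic_set (Ks n) (Js n)| = 1%N) /\
  Ks 0%N \subset Ks 1%N /\ Js N.+1 \subset Js N.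

Definition xstate (x0 : 'cV[R]_K) (xd : nat -> 'cV[R]_K) (tau : nat -> R) (n : nat)
  : 'cV[R]_K := x0 + \sum_(1 <= m < n.+1) tau m *: xd m.
Definition qstate (N : nat) (qN : 'cV[R]_J) (qd : nat -> 'cV[R]_J) (tau : nat -> R)
    (n : nat) : 'cV[R]_J := qN + \sum_(n.+1 <= m < N.+1) tau m *: qd m.

Definition base_seq_system (A : 'M[R]_(K, J)) (beta : 'cV[R]_K) (gamma : 'cV[R]_J)
    (T : R) (N : nat)
    (Ks : nat -> {set 'I_K}) (Js : nat -> {set 'I_J})
    (xd : nat -> 'cV[R]_K) (qd : nat -> 'cV[R]_J)
    (bu0 buN qN bq0 : 'cV[R]_J) (x0 bxN bp0 bpN : 'cV[R]_K) (tau : nat -> R) : Prop :=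
  let x := xstate x0 xd tau in
  let q := qstate N qN qd tau in
  (* (a): v_n is the primal variable leaving from B_n to B_{n+1} *)
  (forall n, (1 <= n < N)%N ->
     forall v, v \in basic_set (Ks n) (Js n) :\: basic_set (Ks n.+1) (Js n.+1) ->
       match v with inr k => x n k 0 = 0 | inl j => q n j 0 = 0 end) /\
  \sum_(1 <= n < N.+1) tau n = T /\
  (forall j, j \in Js 0%N -> bu0 j 0 = 0) /\
  (forall k, k \notin Ks 0%N -> x0 k 0 = 0) /\
  (forall k, k \in Ks 0%N -> bp0 k 0 = 0) /\
  (forall j, j \notin Js 0%N -> bq0 j 0 = 0) /\
  (forall k, k \in Ks N.+1 -> bpN k 0 = 0) /\
  (forall j, j \notin Js N.+1 -> qN j 0 = 0) /\
  (forall j, j \in Js N.+1 -> buN j 0 = 0) /\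
  (forall k, k \notin Ks N.+1 -> bxN k 0 = 0) /\
  A *m bu0 + x0 = beta /\ A^T *m bpN - qN = gamma /\
  A *m buN + bxN - x N = 0 /\ A^T *m bp0 - bq0 + q 0%N = 0.

Definition base_seq_sol_nonneg (N : nat) (xd : nat -> 'cV[R]_K) (qd : nat -> 'cV[R]_J)
    (bu0 buN qN bq0 : 'cV[R]_J) (x0 bxN bp0 bpN : 'cV[R]_K) (tau : nat -> R) : Prop :=
  [/\ forall n, (1 <= n <= N)%N -> 0 <= tau n,
      vnonneg bu0 /\ vnonneg buN /\ vnonneg qN /\ vnonneg bq0,
      vnonneg x0 /\ vnonneg bxN /\ vnonneg bp0 /\ vnonneg bpN,
      (forall n, (n <= N)%N -> vnonneg (xstate x0 xd tau n)) &
      (forall n, (n <= N)%N -> vnonneg (qstate N qN qd tau n))].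

Definition checkU (N : nat) (u : nat -> 'cV[R]_J) (tau : nat -> R) : 'cV[R]_J :=
  \sum_(1 <= n < N.+1) tau n *: u n.
Definition checkP (N : nat) (p : nat -> 'cV[R]_K) (tau : nat -> R) : 'cV[R]_K :=
  \sum_(1 <= n < N.+1) tau n *: p n.

Definition xunder (N : nat) (xd : nat -> 'cV[R]_K) (tau : nat -> R) : 'cV[R]_K :=
  \col_k (- \big[Num.min/0]_(1 <= n < N.+1) \sum_(1 <= m < n.+1) xd m k 0 * tau m).
Definition qunder (N : nat) (qd : nat -> 'cV[R]_J) (tau : nat -> R) : 'cV[R]_J :=
  \col_j (- \big[Num.min/0]_(1 <= n < N.+1) \sum_(n <= m < N.+1) qd m j 0 * tau m).

Definition dotv n (v w : 'cV[R]_n) : R := \sum_i v i 0 * w i 0.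

End Defs.

From HB Require Import structures.
From mathcomp Require Import all_boot all_order all_algebra.
From mathcomp Require Import lra zify.
Import Order.TTheory GRing.Theory Num.Theory.
Set Implicit Arguments. Unset Strict Implicit. Unset Printing Implicit Defensive.
Local Open Scope ring_scope.

(* Both programs are solved by exhibiting dual certificates and checking
   complementary slackness.  For the first one the multipliers are
   [bp0 + checkP] on the constraint [A u0 <= beta - xunder] and [bpN] on the
   second constraint; for the second one they are [buN + checkU] and [bu0].
   The identities [A checkU + sum tau_n xdot^n = T b] and
   [A^T checkP - sum tau_n qdot^n = T c] come from the basic solutions, and
   the boundary equations (d), (e) of the base-sequence system then turn the
   certificates into the required equalities.  The key observation for
   complementary slackness is that [x0 - xunder] is the componentwise minimum
   of the states [x^0, ..., x^N]: it vanishes wherever some [x^n] does, hence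
   off [Ks n] for every [n], where [p^n] may be nonzero; symmetrically
   [qN - qunder] is the minimum of [q^0, ..., q^N]. *)

Section DotProduct.
Variable R : realFieldType.

Lemma dotvC n (v w : 'cV[R]_n) : dotv v w = dotv w v.
Proof. by apply: eq_bigr => i _; rewrite mulrC. Qed.

Lemma dotv_trmx_mulmx m n (M : 'M[R]_(m, n)) (y : 'cV_m) (v : 'cV_n) :
  dotv (M^T *m y) v = dotv y (M *m v).
Proof.
have dotvE k (a b : 'cV[R]_k) : dotv a b = (a^T *m b) 0 0.
  by rewrite mxE; apply: eq_bigr => i _; rewrite mxE.
by rewrite !dotvE trmx_mul trmxK mulmxA.
Qed.

Lemma dotvDl n (v1 v2 w : 'cV[R]_n) : dotv (v1 + v2) w = dotv v1 w + dotv v2 w.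
Proof.
by rewrite /dotv -big_split; apply: eq_bigr => i _; rewrite mxE mulrDl.
Qed.

Lemma dotvDr n (v w1 w2 : 'cV[R]_n) : dotv v (w1 + w2) = dotv v w1 + dotv v w2.
Proof. by rewrite dotvC dotvDl !(dotvC v). Qed.

Lemma dotvNl n (v w : 'cV[R]_n) : dotv (- v) w = - dotv v w.
Proof. by rewrite /dotv -sumrN; apply: eq_bigr => i _; rewrite mxE mulNr. Qed.

Lemma dotv_suml n I (r : seq I) (a : I -> R) (v : I -> 'cV[R]_n) w :
  dotv (\sum_(i <- r) a i *: v i) w = \sum_(i <- r) a i * dotv (v i) w.
Proof.
rewrite /dotv; under [RHS]eq_bigr do rewrite mulr_sumr.
rewrite exchange_big; apply: eq_bigr => k _.
by rewrite summxE mulr_suml; apply: eq_bigr => i _; rewrite mxE mulrA.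
Qed.

Lemma dotv_ge0 n (v w : 'cV[R]_n) : vnonneg v -> vnonneg w -> 0 <= dotv v w.
Proof. by move=> v_ge0 w_ge0; apply: sumr_ge0 => i _; apply: mulr_ge0. Qed.

Lemma ler_dotv n (y v w : 'cV[R]_n) :
  vnonneg y -> vle v w -> dotv y v <= dotv y w.
Proof. by move=> y_ge0 le_vw; apply: ler_sum => i _; apply: ler_wpM2l. Qed.

Lemma dotv_eq0_split n (S : {set 'I_n}) (v w : 'cV[R]_n) :
  (forall i, i \in S -> v i 0 = 0) -> (forall i, i \notin S -> w i 0 = 0) ->
  dotv v w = 0.
Proof.
move=> vS wS; apply: big1 => i _.
by case: (boolP (i \in S)) => [/vS|/wS] ->; rewrite ?mul0r ?mulr0.
Qed.

Lemma vnonnegD n (v w : 'cV[R]_n) : vnonneg v -> vnonneg w -> vnonneg (v + w).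
Proof. by move=> v_ge0 w_ge0 i; rewrite mxE addr_ge0. Qed.

Lemma vnonneg_sum n (I : eqType) (r : seq I) (a : I -> R) (v : I -> 'cV[R]_n) :
  (forall i, i \in r -> 0 <= a i) -> (forall i, i \in r -> vnonneg (v i)) ->
  vnonneg (\sum_(i <- r) a i *: v i).
Proof.
move=> a_ge0 v_ge0 k; rewrite summxE big_seq; apply: sumr_ge0 => i ri.
by rewrite mxE mulr_ge0 ?a_ge0 ?v_ge0.
Qed.

Lemma vle_addr n (v s : 'cV[R]_n) : vnonneg s -> vle v (v + s).
Proof. by move=> s_ge0 i; rewrite mxE lerDl. Qed.

Lemma vle_opp n (v w : 'cV[R]_n) : vle (- v) (- w) <-> vle w v.
Proof. by split=> le_vw i; have := le_vw i; rewrite !mxE lerN2. Qed.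

End DotProduct.

Section TwoStageLP.
Variables (R : realFieldType) (m n : nat).

(* [max g1.z0 + g2.zN] subject to [two_stage_packing M r1 r2 z0 zN], and
   [min h1.zN + h2.z0] subject to [two_stage_covering M r1 r2 zN z0]. *)
Definition two_stage_packing (M : 'M[R]_(m, n)) (r1 r2 : 'cV[R]_m)
    (z0 zN : 'cV[R]_n) : Prop :=
  [/\ vle (M *m z0) r1, vle (M *m z0 + M *m zN) r2, vnonneg z0 & vnonneg zN].

Definition two_stage_covering (M : 'M[R]_(m, n)) (r1 r2 : 'cV[R]_m)
    (zN z0 : 'cV[R]_n) : Prop :=
  [/\ vle r1 (M *m zN), vle r2 (M *m zN + M *m z0), vnonneg zN & vnonneg z0].

Lemma two_stage_covering_packing M r1 r2 zN z0 :
  two_stage_covering M r1 r2 zN z0 <->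
  two_stage_packing (- M) (- r1) (- r2) zN z0.
Proof.
rewrite /two_stage_packing !mulNmx -opprD.
by split=> -[/vle_opp le1 /vle_opp le2 zN_ge0 z0_ge0].
Qed.

Section Certificate.
Variables (M : 'M[R]_(m, n)) (g1 g2 t1 t2 : 'cV[R]_n) (r1 r2 y1 y2 : 'cV[R]_m).
Hypotheses (dual1 : M^T *m (y1 + y2) = g1 + t1) (dual2 : M^T *m y2 = g2 + t2).
Hypotheses (y1_ge0 : vnonneg y1) (y2_ge0 : vnonneg y2).
Hypotheses (t1_ge0 : vnonneg t1) (t2_ge0 : vnonneg t2).

Lemma two_stage_lagrangian v0 vN :
  dotv y1 (M *m v0) + dotv y2 (M *m v0 + M *m vN)
  = dotv g1 v0 + dotv g2 vN + (dotv t1 v0 + dotv t2 vN).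
Proof.
rewrite dotvDr addrA -dotvDl -!dotv_trmx_mulmx dual1 dual2 !dotvDl.
by rewrite addrACA.
Qed.

Lemma two_stage_weak_duality v0 vN : two_stage_packing M r1 r2 v0 vN ->
  dotv g1 v0 + dotv g2 vN <= dotv y1 r1 + dotv y2 r2.
Proof.
case=> le1 le2 v0_ge0 vN_ge0; have := two_stage_lagrangian v0 vN.
have := ler_dotv y1_ge0 le1; have := ler_dotv y2_ge0 le2.
have := dotv_ge0 t1_ge0 v0_ge0; have := dotv_ge0 t2_ge0 vN_ge0.
lra.
Qed.

Lemma two_stage_packing_optimal z0 zN s1 s2 :
  M *m z0 + s1 = r1 -> M *m z0 + M *m zN + s2 = r2 ->
  vnonneg s1 -> vnonneg s2 -> vnonneg z0 -> vnonneg zN ->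
  dotv t1 z0 = 0 -> dotv t2 zN = 0 -> dotv y1 s1 = 0 -> dotv y2 s2 = 0 ->
  two_stage_packing M r1 r2 z0 zN /\
  forall v0 vN, two_stage_packing M r1 r2 v0 vN ->
    dotv g1 v0 + dotv g2 vN <= dotv g1 z0 + dotv g2 zN.
Proof.
move=> slack1 slack2 s1_ge0 s2_ge0 z0_ge0 zN_ge0 cs1 cs2 cs3 cs4.
have value : dotv g1 z0 + dotv g2 zN = dotv y1 r1 + dotv y2 r2.
  have := two_stage_lagrangian z0 zN.
  by rewrite -slack1 -slack2 !dotvDr cs1 cs2 cs3 cs4; lra.
split; first by split=> //; [rewrite -slack1 | rewrite -slack2]; apply: vle_addr.
by rewrite value; apply: two_stage_weak_duality.
Qed.

End Certificate.

Lemma two_stage_covering_optimal (M : 'M[R]_(m, n)) (h1 h2 t1 t2 zN z0 : 'cV[R]_n)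
    (r1 r2 y1 y2 s1 s2 : 'cV[R]_m) :
  M^T *m (y1 + y2) + t1 = h1 -> M^T *m y2 + t2 = h2 ->
  M *m zN = r1 + s1 -> M *m zN + M *m z0 = r2 + s2 ->
  vnonneg y1 -> vnonneg y2 -> vnonneg t1 -> vnonneg t2 ->
  vnonneg s1 -> vnonneg s2 -> vnonneg zN -> vnonneg z0 ->
  dotv t1 zN = 0 -> dotv t2 z0 = 0 -> dotv y1 s1 = 0 -> dotv y2 s2 = 0 ->
  two_stage_covering M r1 r2 zN z0 /\
  forall wN w0, two_stage_covering M r1 r2 wN w0 ->
    dotv h1 zN + dotv h2 z0 <= dotv h1 wN + dotv h2 w0.
Proof.
move=> dual1 dual2 cover1 cover2 y1_ge0 y2_ge0 t1_ge0 t2_ge0 s1_ge0 s2_ge0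
  zN_ge0 z0_ge0 cs1 cs2 cs3 cs4.
have negated_dual (y : 'cV_m) (t h : 'cV_n) :
    M^T *m y + t = h -> (- M)^T *m y = - h + t.
  by move=> <-; rewrite linearN mulNmx opprD subrK.
have slack1 : (- M) *m zN + s1 = - r1 by rewrite mulNmx cover1 opprD subrK.
have slack2 : (- M) *m zN + (- M) *m z0 + s2 = - r2.
  by rewrite !mulNmx -opprD cover2 opprD subrK.
have [feasible optimal] := two_stage_packing_optimal (negated_dual _ _ _ dual1)
  (negated_dual _ _ _ dual2) y1_ge0 y2_ge0 t1_ge0 t2_ge0 slack1 slack2
  s1_ge0 s2_ge0 zN_ge0 z0_ge0 cs1 cs2 cs3 cs4.
split; first exact/two_stage_covering_packing.
move=> wN w0 /two_stage_covering_packing /optimal; rewrite !dotvNl; lra.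
Qed.

End TwoStageLP.

Lemma vanish_off_support (I : finType) (V : nmodType) (N : nat)
    (S : nat -> {set I}) (s : nat -> I -> V) :
  (forall i, i \notin S 0%N -> s 0%N i = 0) -> S 0%N \subset S 1%N ->
  (forall n i, (n < N)%N -> i \notin S n.+1 -> s n.+1 i = s n i) ->
  (forall n i, (1 <= n < N)%N -> i \in S n -> i \notin S n.+1 -> s n i = 0) ->
  forall n i, (n <= N)%N -> i \notin S n -> s n i = 0.
Proof.
move=> s0 S01 step leave; elim=> [|n IH] i le_nN iSn; first exact: s0.
rewrite step //; have [iS|iS] := boolP (i \in S n); last by apply: IH => //; lia.
case: n {IH} le_nN iS iSn => [|n] le_nN iS iSn.
  by rewrite (subsetP S01 _ iS) in iSn.
by apply: leave => //; lia.
Qed.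

Section BaseSequence.
Variables (R : realFieldType) (K J : nat) (A : 'M[R]_(K, J)).
Variables (beta b : 'cV[R]_K) (gamma c : 'cV[R]_J) (T : R) (N : nat).
Variables (Ks : nat -> {set 'I_K}) (Js : nat -> {set 'I_J}).
Variables (u : nat -> 'cV[R]_J) (xd : nat -> 'cV[R]_K).
Variables (p : nat -> 'cV[R]_K) (qd : nat -> 'cV[R]_J).
Variables (bu0 buN qN bq0 : 'cV[R]_J) (x0 bxN bp0 bpN : 'cV[R]_K).
Variable tau : nat -> R.

Local Notation x := (xstate x0 xd tau).
Local Notation q := (qstate N qN qd tau).
Local Notation xu := (xunder N xd tau).
Local Notation qu := (qunder N qd tau).
Local Notation Uc := (checkU N u tau).
Local Notation Pc := (checkP N p tau).

Hypothesis bases : forall n, (1 <= n <= N)%N ->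
  [/\ is_base A (Ks n) (Js n), primal_basic_sol A b (Ks n) (Js n) (u n) (xd n),
      dual_basic_sol A c (Ks n) (Js n) (p n) (qd n),
      vnonneg (u n) & vnonneg (p n)].
Hypotheses (Ks01 : Ks 0%N \subset Ks 1%N) (JsN : Js N.+1 \subset Js N).
Hypothesis leaving : forall n, (1 <= n < N)%N ->
  forall v, v \in basic_set (Ks n) (Js n) :\: basic_set (Ks n.+1) (Js n.+1) ->
  match v with inr k => x n k 0 = 0 | inl j => q n j 0 = 0 end.
Hypothesis tau_sum : \sum_(1 <= n < N.+1) tau n = T.
Hypotheses (bu0_Js0 : forall j, j \in Js 0%N -> bu0 j 0 = 0)
  (x0_Ks0 : forall k, k \notin Ks 0%N -> x0 k 0 = 0)
  (bp0_Ks0 : forall k, k \in Ks 0%N -> bp0 k 0 = 0)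
  (bq0_Js0 : forall j, j \notin Js 0%N -> bq0 j 0 = 0)
  (bpN_KsN : forall k, k \in Ks N.+1 -> bpN k 0 = 0)
  (qN_JsN : forall j, j \notin Js N.+1 -> qN j 0 = 0)
  (buN_JsN : forall j, j \in Js N.+1 -> buN j 0 = 0)
  (bxN_KsN : forall k, k \notin Ks N.+1 -> bxN k 0 = 0).
Hypotheses (init_primal : A *m bu0 + x0 = beta)
  (init_dual : A^T *m bpN - qN = gamma).
Hypotheses (final_primal : A *m buN + bxN - x N = 0)
  (final_dual : A^T *m bp0 - bq0 + q 0%N = 0).
Hypothesis tau_ge0 : forall n, (1 <= n <= N)%N -> 0 <= tau n.
Hypotheses (bu0_ge0 : vnonneg bu0) (buN_ge0 : vnonneg buN) (qN_ge0 : vnonneg qN)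
  (bq0_ge0 : vnonneg bq0) (x0_ge0 : vnonneg x0) (bxN_ge0 : vnonneg bxN)
  (bp0_ge0 : vnonneg bp0) (bpN_ge0 : vnonneg bpN).
Hypotheses (xstate_ge0 : forall n, (n <= N)%N -> vnonneg (x n))
  (qstate_ge0 : forall n, (n <= N)%N -> vnonneg (q n)).

Lemma xstateS n : x n.+1 = x n + tau n.+1 *: xd n.+1.
Proof. by rewrite /xstate big_nat_recr //= addrA. Qed.

Lemma qstateS n : (n < N)%N -> q n = q n.+1 + tau n.+1 *: qd n.+1.
Proof. by move=> lt_nN; rewrite /qstate big_ltn // addrCA addrC. Qed.

Lemma xstate_vanish n k : (n <= N)%N -> k \notin Ks n -> x n k 0 = 0.
Proof.
apply: (vanish_off_support (S := Ks) (s := fun n k => x n k 0)) => //.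
- by move=> i iKs0; rewrite /xstate big_geq // addr0 x0_Ks0.
- move=> m i lt_mN iKs.
  have [_ [_ [_ xd_Ks]] _ _ _] := bases (n := m.+1) ltac:(lia).
  by rewrite xstateS [LHS]mxE [X in _ + X]mxE xd_Ks // mulr0 addr0.
- move=> m i m_range iKs iKs'; apply: (leaving m_range (v := inr i)).
  by rewrite !inE iKs iKs'.
Qed.

Lemma qstate_vanish n j : (n <= N)%N -> j \notin Js n.+1 -> q n j 0 = 0.
Proof.
(* Run the support argument backwards in time: the [i]-th state is
   [q (N - i)], with index set [Js (N.+1 - i)]. *)
move=> le_nN; have := vanish_off_support (S := fun i => Js (N.+1 - i))
  (s := fun i j => q (N - i) j 0) _ _ _ _ (leq_subr n N) (i := j).
have [-> ->] : (N - (N - n) = n /\ N.+1 - (N - n) = n.+1)%N by lia.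
apply=> [i|||].
- by rewrite !subn0 /qstate big_geq // addr0 => /qN_JsN.
- by rewrite subn0 subn1.
- move=> m i lt_mN; have e : (N - m = (N - m.+1).+1)%N by lia.
  rewrite subSS e => iJs; rewrite qstateS; last by lia.
  have [_ _ [_ [_ qd_Js]] _ _] := bases (n := (N - m.+1).+1) ltac:(lia).
  by rewrite [LHS]mxE [X in _ + X]mxE qd_Js // mulr0 addr0.
- move=> m i m_range; have e : (N.+1 - m = (N - m).+1)%N by lia.
  rewrite e subSS => iJs iJs'.
  apply: (leaving (n := N - m) _ (v := inl i)); first lia.
  by rewrite !inE iJs iJs'.
Qed.

Lemma xstate_entry n k :
  x n k 0 = x0 k 0 + \sum_(1 <= m < n.+1) xd m k 0 * tau m.
Proof.
rewrite /xstate mxE summxE; congr (_ + _).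
by apply: eq_bigr => m _; rewrite mxE mulrC.
Qed.

Lemma qstate_entry n j :
  q n j 0 = qN j 0 + \sum_(n.+1 <= m < N.+1) qd m j 0 * tau m.
Proof.
rewrite /qstate mxE summxE; congr (_ + _).
by apply: eq_bigr => m _; rewrite mxE mulrC.
Qed.

Lemma xfloor_ge0 : vnonneg (x0 - xu).
Proof.
move=> k; rewrite !mxE opprK -[X in X <= _](subrr (x0 k 0)) lerD2l big_seq.
apply: le_bigmin => [|n]; first by rewrite oppr_le0.
rewrite mem_index_iota => /andP[_ le_nN].
by have := xstate_ge0 le_nN k; rewrite xstate_entry; lra.
Qed.

Lemma qfloor_ge0 : vnonneg (qN - qu).
Proof.
move=> j; rewrite !mxE opprK -[X in X <= _](subrr (qN j 0)) lerD2l big_seq.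
apply: le_bigmin => [|n]; first by rewrite oppr_le0.
rewrite mem_index_iota => /andP[n_gt0 le_nN].
have := qstate_ge0 (n := n.-1) ltac:(lia) j.
by rewrite qstate_entry prednK //; lra.
Qed.

Lemma xfloor_le_xstate n : (n <= N)%N -> vle (x0 - xu) (x n).
Proof.
move=> le_nN k; rewrite xstate_entry !mxE opprK lerD2l.
case: n le_nN => [|n] le_nN.
  by rewrite [X in _ <= X]big_geq // bigmin_le_id.
by apply: ge_bigmin_seq => //; rewrite mem_index_iota; lia.
Qed.

Lemma qfloor_le_qstate n : (n <= N)%N -> vle (qN - qu) (q n).
Proof.
move=> le_nN j; rewrite qstate_entry !mxE opprK lerD2l.
have [lt_nN|ge_nN] := ltnP n N; last first.
  by rewrite [X in _ <= X]big_geq ?bigmin_le_id //; lia.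
by apply: ge_bigmin_seq => //; rewrite mem_index_iota; lia.
Qed.

Lemma xfloor_vanish n : (n <= N)%N ->
  forall k, k \notin Ks n -> (x0 - xu) k 0 = 0.
Proof.
move=> le_nN k kKs; apply/le_anti; rewrite xfloor_ge0 andbT.
by rewrite -(xstate_vanish le_nN kKs) xfloor_le_xstate.
Qed.

Lemma qfloor_vanish n : (n <= N)%N ->
  forall j, j \notin Js n.+1 -> (qN - qu) j 0 = 0.
Proof.
move=> le_nN j jJs; apply/le_anti; rewrite qfloor_ge0 andbT.
by rewrite -(qstate_vanish le_nN jJs) qfloor_le_qstate.
Qed.

Lemma xfloor_complementarity : dotv (bp0 + Pc) (x0 - xu) = 0.
Proof.
rewrite dotvDl (dotv_eq0_split bp0_Ks0 (xfloor_vanish (leq0n N))) add0r.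
rewrite /checkP dotv_suml big_seq big1 // => m; rewrite mem_index_iota => m_range.
have [_ _ [_ [p_Ks _]] _ _] := bases (n := m) ltac:(lia).
by rewrite (dotv_eq0_split p_Ks (xfloor_vanish (n := m) _)) ?mulr0 //; lia.
Qed.

Lemma qfloor_complementarity : dotv (buN + Uc) (qN - qu) = 0.
Proof.
rewrite dotvDl (dotv_eq0_split buN_JsN (qfloor_vanish (leqnn N))) add0r.
rewrite /checkU dotv_suml big_seq big1 // => m; rewrite mem_index_iota => m_range.
have [_ [_ [u_Js _]] _ _ _] := bases (n := m) ltac:(lia).
have Jsm : forall j, j \notin Js m -> (qN - qu) j 0 = 0.
  by rewrite -(prednK (n := m)); [apply: qfloor_vanish | ]; lia.
by rewrite (dotv_eq0_split u_Js Jsm) mulr0.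
Qed.

Lemma checkU_balance : \sum_(1 <= m < N.+1) tau m *: xd m + A *m Uc = T *: b.
Proof.
rewrite /checkU mulmx_sumr -big_split /= -tau_sum scaler_suml.
apply: eq_big_nat => m m_range; have [_ [prim _] _ _ _] := bases m_range.
by rewrite -scalemxAr -scalerDr addrC prim.
Qed.

Lemma checkP_balance : A^T *m Pc - \sum_(1 <= m < N.+1) tau m *: qd m = T *: c.
Proof.
rewrite /checkP mulmx_sumr -sumrB -tau_sum scaler_suml.
apply: eq_big_nat => m m_range; have [_ _ [dual _] _ _] := bases m_range.
by rewrite -scalemxAr -scalerBr dual.
Qed.

Lemma primal_two_stage_optimal :
  two_stage_packing A (beta - xu) (beta + T *: b - A *m Uc) bu0 buN /\
  forall v0 vN, two_stage_packing A (beta - xu) (beta + T *: b - A *m Uc) v0 vN ->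
    dotv (gamma + T *: c) v0 + dotv gamma vN
      <= dotv (gamma + T *: c) bu0 + dotv gamma buN.
Proof.
have dual1 : A^T *m (bp0 + Pc + bpN) = gamma + T *: c + bq0.
  apply/matrixP => i j; move: (final_dual) (init_dual) checkP_balance.
  move=> /matrixP/(_ i j) + /matrixP/(_ i j) + /matrixP/(_ i j).
  by rewrite /qstate !mulmxDr !mxE; lra.
have dual2 : A^T *m bpN = gamma + qN by rewrite -init_dual subrK.
have slack1 : A *m bu0 + (x0 - xu) = beta - xu by rewrite addrA init_primal.
have slack2 : A *m bu0 + A *m buN + bxN = beta + T *: b - A *m Uc.
  apply/matrixP => i j; move: (final_primal) (init_primal) checkU_balance.
  move=> /matrixP/(_ i j) + /matrixP/(_ i j) + /matrixP/(_ i j).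
  by rewrite /xstate !mxE; lra.
have Pc_ge0 : vnonneg Pc.
  apply: vnonneg_sum => m; rewrite mem_index_iota => m_range.
    exact: tau_ge0.
  by case: (bases m_range).
apply: (two_stage_packing_optimal dual1 dual2 (vnonnegD bp0_ge0 Pc_ge0) bpN_ge0
  bq0_ge0 qN_ge0 slack1 slack2 xfloor_ge0 bxN_ge0 bu0_ge0 buN_ge0).
- by rewrite dotvC (dotv_eq0_split bu0_Js0 bq0_Js0).
- by rewrite dotvC (dotv_eq0_split buN_JsN qN_JsN).
- exact: xfloor_complementarity.
- exact: dotv_eq0_split bpN_KsN bxN_KsN.
Qed.

Lemma dual_two_stage_optimal :
  two_stage_covering A^T (gamma + qu) (gamma + T *: c - A^T *m Pc) bpN bp0 /\
  forall wN w0,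
    two_stage_covering A^T (gamma + qu) (gamma + T *: c - A^T *m Pc) wN w0 ->
    dotv (beta + T *: b) bpN + dotv beta bp0
      <= dotv (beta + T *: b) wN + dotv beta w0.
Proof.
have primal1 : A^T^T *m (buN + Uc + bu0) + bxN = beta + T *: b.
  apply/matrixP => i j; move: (final_primal) (init_primal) checkU_balance.
  move=> /matrixP/(_ i j) + /matrixP/(_ i j) + /matrixP/(_ i j).
  by rewrite trmxK /xstate !mulmxDr !mxE; lra.
have primal2 : A^T^T *m bu0 + x0 = beta by rewrite trmxK.
have cover1 : A^T *m bpN = gamma + qu + (qN - qu).
  by rewrite (addrC qN) addrA addrK -init_dual subrK.
have cover2 : A^T *m bpN + A^T *m bp0 = gamma + T *: c - A^T *m Pc + bq0.
  apply/matrixP => i j; move: (final_dual) (init_dual) checkP_balance.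
  move=> /matrixP/(_ i j) + /matrixP/(_ i j) + /matrixP/(_ i j).
  by rewrite /qstate !mxE; lra.
have Uc_ge0 : vnonneg Uc.
  apply: vnonneg_sum => m; rewrite mem_index_iota => m_range.
    exact: tau_ge0.
  by case: (bases m_range).
apply: (two_stage_covering_optimal primal1 primal2 cover1 cover2
  (vnonnegD buN_ge0 Uc_ge0) bu0_ge0 bxN_ge0 x0_ge0 qfloor_ge0 bq0_ge0
  bpN_ge0 bp0_ge0).
- by rewrite dotvC (dotv_eq0_split bpN_KsN bxN_KsN).
- by rewrite dotvC (dotv_eq0_split bp0_Ks0 x0_Ks0).
- exact: qfloor_complementarity.
- exact: dotv_eq0_split bu0_Js0 bq0_Js0.
Qed.

End BaseSequence.

Theorem mainTheorem4 (R : realFieldType) (K J : nat) (A : 'M[R]_(K, J))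
    (beta b : 'cV[R]_K) (gamma c : 'cV[R]_J) (T : R) (hT : 0 < T)
    (N : nat) (Ks : nat -> {set 'I_K}) (Js : nat -> {set 'I_J})
    (u : nat -> 'cV[R]_J) (xd : nat -> 'cV[R]_K)
    (p : nat -> 'cV[R]_K) (qd : nat -> 'cV[R]_J)
    (bu0 buN qN bq0 : 'cV[R]_J) (x0 bxN bp0 bpN : 'cV[R]_K) (tau : nat -> R) :
  nondegenerate_I A b c ->
  base_sequence A b c N Ks Js u xd p qd ->
  base_seq_system A beta gamma T N Ks Js xd qd bu0 buN qN bq0 x0 bxN bp0 bpN tau ->
  base_seq_sol_nonneg N xd qd bu0 buN qN bq0 x0 bxN bp0 bpN tau ->
  let xu := xunder N xd tau in
  let qu := qunder N qd tau in
  let Uc := checkU N u tau in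
  let Pc := checkP N p tau in
  let primal_feas (v0 vN : 'cV[R]_J) :=
    [/\ vle (A *m v0) (beta - xu),
        vle (A *m v0 + A *m vN) (beta + T *: b - A *m Uc),
        vnonneg v0 & vnonneg vN] in
  let dual_feas (wN w0 : 'cV[R]_K) :=
    [/\ vle (gamma + qu) (A^T *m wN),
        vle (gamma + T *: c - A^T *m Pc) (A^T *m wN + A^T *m w0),
        vnonneg wN & vnonneg w0] in
  (primal_feas bu0 buN /\
   forall v0 vN, primal_feas v0 vN ->
     dotv (gamma + T *: c) v0 + dotv gamma vN
       <= dotv (gamma + T *: c) bu0 + dotv gamma buN) /\
  (dual_feas bpN bp0 /\
   forall wN w0, dual_feas wN w0 ->
     dotv (beta + T *: b) bpN + dotv beta bp0
       <= dotv (beta + T *: b) wN + dotv beta w0).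
Proof.
move=> _ [_ [? [_ [? ?]]]] [? [? [? [? [? [? [? [? [? [? [? [? [? ?]]]]]]]]]]]]]
  [? [? [? [? ?]]] [? [? [? ?]]] ? ?] xu qu Uc Pc primal_feas dual_feas.
split; [apply: primal_two_stage_optimal | apply: dual_two_stage_optimal];
  eassumption.
Qed.
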